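(* Let $A\in\mathbb{R}^{n\times n}$ be symmetric, $g\in\mathbb{R}^n$ nonzero, $\Delta>0$, and let $x_k,\lambda_k,T_k,\beta_k$ be the quantities of the $k$-th step of the GLTR method described in the context. Let $r_k=(A+\lambda_kI)x_k+g$ and let $\kappa_k=\lambda_{\max}(T_k+\lambda_kI)/\lambda_{\min}(T_k+\lambda_kI)$ be the 2-condition number of $T_k+\lambda_kI$. Then $$\|r_k\|\le 2\beta_k\|x_k\|\Big(\frac{\sqrt{\kappa_k}-1}{\sqrt{\kappa_k}+1}\Big)^{k-1}.$$
   Context: All norms are Euclidean. The Lanczos process on $A$ with starting vector $g$ gives $Q_k=[q_1,\ldots,q_k]$ with orthonormal columns spanning $\mathcal{K}_k(A,g)=\mathrm{span}\{g,\ldots,A^{k-1}g\}$, $q_1=g/\|g\|$, symmetric tridiagonal $T_k=Q_k^TAQ_k$ with off-diagonal entries $\beta_1,\ldots,\beta_{k-1}$, and $AQ_k=Q_kT_k+\beta_kq_{k+1}e_k^T$ ($\beta_k$ is the $(k,k+1)$ entry of $T_{k+1}$). The GLTR iterate is $x_k=Q_kh_k$ where $h_k$ is the minimizer of $\frac12h^TT_kh+\|g\|h^Te_1$ over $\|h\|\le\Delta$ with Lagrange multiplier $\lambda_k\ge0$: $(T_k+\lambda_kI)h_k=-\|g\|e_1$, $\lambda_k(\Delta-\|h_k\|)=0$, and $T_k+\lambda_kI$ is positive definite. *)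

From HB Require Import structures.
From mathcomp Require Import all_boot all_order all_algebra.
Set Implicit Arguments. Unset Strict Implicit. Unset Printing Implicit Defensive.
Import Order.TTheory GRing.Theory Num.Theory.
Local Open Scope ring_scope.

Definition vnorm (R : rcfType) (n : nat) (v : 'cV[R]_n) : R :=
  Num.sqrt (\sum_(i < n) v i 0 ^+ 2).

Definition e_first (R : rcfType) (k : nat) : 'cV[R]_k :=
  \col_(i < k) (nat_of_ord i == 0%N)%:R.
Definition e_last (R : rcfType) (k : nat) : 'cV[R]_k :=
  \col_(i < k) (nat_of_ord i == k.-1)%:R.

(* Krylov matrix: rows are (A^j g)^T, j = 0..k-1; its row space is K_k(A,g) *)
Definition krylov (R : rcfType) (n k : nat) (A : 'M[R]_n) (g : 'cV[R]_n)
  : 'M[R]_(k, n) :=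
  \matrix_(j < k) (iter j (mulmx A) g)^T.

Definition sc (R : rcfType) (M : 'M[R]_1) : R := M ord0 ord0.

Definition tr_model (R : rcfType) (k : nat) (T : 'M[R]_k) (gn : R) (h : 'cV[R]_k) : R :=
  2^-1 * sc (h^T *m T *m h) + gn * sc (h^T *m e_first R k).

Definition tridiagonal (R : rcfType) (k : nat) (T : 'M[R]_k) : Prop :=
  forall i j : 'I_k, ((i.+1 < j)%N || (j.+1 < i)%N) -> T i j = 0.

Definition posdef (R : rcfType) (k : nat) (M : 'M[R]_k) : Prop :=
  forall v : 'cV[R]_k, v != 0 -> 0 < sc (v^T *m M *m v).

From HB Require Import structures.
From mathcomp Require Import all_boot all_order all_algebra.
From mathcomp Require Import ring lra spectral sesquilinear.
From mathcomp.real_closed Require Import complex.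
Import Order.TTheory GRing.Theory Num.Theory Num.Def.
Local Open Scope ring_scope.

(* The residual is r_k = beta_k (e_k^T h_k) q_(k+1), so it suffices to bound the
   last entry of h_k. Put M = T_k + lambda_k I. Since M h_k is a multiple of e_1
   and M is tridiagonal, the vectors M^j e_1 with j < k - 1 vanish in their last
   entry, hence s(M) h_k and h_k have the same last entry for every polynomial s
   of degree < k with s(0) = 1. Take for s the Chebyshev polynomial of degree
   k - 1 for the interval [lambda_min, lambda_max], normalized at 0: it is
   bounded there by 2 ((sqrt kappa - 1) / (sqrt kappa + 1))^(k-1), and by the
   spectral theorem so is the operator norm of s(M). Finally ||x_k|| = ||h_k||
   because Q_k has orthonormal columns. *)

Section Chebyshev.
Context {R : comNzRingType}.

Fixpoint cheb (n : nat) : {poly R} :=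
  match n with
  | 0 => 1
  | 1 => 'X
  | (m.+1 as m1).+1 => 'X * cheb m1 *+ 2 - cheb m
  end.

Lemma chebSS n : cheb n.+2 = 'X * cheb n.+1 *+ 2 - cheb n.
Proof. by []. Qed.

Lemma size_cheb n : (size (cheb n) <= n.+1)%N.
Proof.
suff: (size (cheb n) <= n.+1)%N /\ (size (cheb n.+1) <= n.+2)%N by case.
elim: n => [|n [IHn IHn1]]; first by rewrite size_poly1 size_polyX.
split=> //; rewrite chebSS mulr2n.
have sX : (size ('X * cheb n.+1)%R <= n.+3)%N.
  by rewrite (leq_trans (size_polyMleq _ _)) // size_polyX.
rewrite (leq_trans (size_polyD _ _)) // geq_max size_polyN.
rewrite (leq_trans (size_polyD _ _)) ?geq_max ?sX //=.
by rewrite (leq_trans IHn) // ltnW.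
Qed.

Lemma cheb_invariant n x :
  (cheb n.+1).[x] ^+ 2 - x * (cheb n).[x] * (cheb n.+1).[x] *+ 2 + (cheb n).[x] ^+ 2
  = 1 - x ^+ 2.
Proof.
elim: n => [|n IHn]; first by rewrite !hornerE; ring.
by rewrite chebSS !hornerE -IHn; ring.
Qed.

End Chebyshev.

Lemma horner_cheb_half_sum {F : numFieldType} n (t u : F) : t * u = 1 ->
  (cheb n).[(t + u) / 2] = (t ^+ n + u ^+ n) / 2.
Proof.
move=> tu.
suff: (cheb n).[(t + u) / 2] = (t ^+ n + u ^+ n) / 2 /\
      (cheb n.+1).[(t + u) / 2] = (t ^+ n.+1 + u ^+ n.+1) / 2 by case.
elim: n => [|n [IHn IHn1]]; first by rewrite !hornerE; split; field.
split=> //; rewrite chebSS !hornerE IHn IHn1.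
have -> : (t ^+ n + u ^+ n) / 2 = t * u * ((t ^+ n + u ^+ n) / 2) by rewrite tu mul1r.
by rewrite !exprS; field.
Qed.

Lemma norm_horner_cheb_le1 {F : realFieldType} n (x : F) :
  `|x| <= 1 -> `|(cheb n).[x]| <= 1.
Proof.
move=> x1; have x21 : x ^+ 2 <= 1 by rewrite -real_normK ?num_real // expr_le1.
have [x2lt1|x2ge1] := ltrP (x ^+ 2) 1.
  (* The invariant reads (T_(n+1)(x) - x T_n(x))^2 + (1 - x^2) T_n(x)^2 = 1 - x^2. *)
  set u := (cheb n).[x]; have inv := cheb_invariant n x; rewrite -/u in inv.
  have : (1 - x ^+ 2) * u ^+ 2 <= (1 - x ^+ 2) * 1.
    by have := sqr_ge0 ((cheb n.+1).[x] - x * u); nra.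
  rewrite ler_pM2l ?subr_gt0 // => u21.
  by rewrite -(expr_le1 (n := 2)) // real_normK ?num_real.
have xx : x * x = 1 by rewrite -expr2; apply/eqP; rewrite eq_le x21 x2ge1.
have -> : x = (x + x) / 2 by field.
rewrite horner_cheb_half_sum // (_ : (x ^+ n + x ^+ n) / 2 = x ^+ n); last by field.
by rewrite normrX exprn_ile1.
Qed.

Section ChebyshevInterval.
Context {R : rcfType}.

Definition cheb_rate (kappa : R) := (Num.sqrt kappa - 1) / (Num.sqrt kappa + 1).

Lemma small_poly_on_interval_lt m (a b : R) : 0 < a -> a < b ->
  exists s : {poly R}, [/\ (size s <= m.+1)%N, s.[0] = 1 &
    forall t, a <= t <= b -> `|s.[t]| <= 2 * cheb_rate (b / a) ^+ m].
Proof.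
move=> a0 ab; rewrite /cheb_rate; set sg := Num.sqrt (b / a).
set rho := (sg - 1) / (sg + 1).
have ba1 : 1 < b / a by rewrite ltr_pdivlMr // mul1r.
have sg1 : 1 < sg by rewrite -sqrtr1 ltr_sqrt // (lt_trans ltr01 ba1).
have sgsq : sg ^+ 2 = b / a by rewrite sqr_sqrtr // ltW // (lt_trans ltr01 ba1).
pose th := (sg + 1) / (sg - 1).
have thrho : th * rho = 1 by rewrite /th /rho; field; rewrite ?gt_eqF ?subr_gt0 //; lra.
have th0 : 0 < th by rewrite divr_gt0 ?subr_gt0 //; lra.
have rho0 : 0 < rho by rewrite divr_gt0 ?subr_gt0 //; lra.
pose L : {poly R} := ((b + a) / (b - a))%:P - (2 / (b - a)) *: 'X.
have LE t : L.[t] = ((b + a) - 2 * t) / (b - a).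
  by rewrite /L !hornerE; field; rewrite gt_eqF ?subr_gt0.
have L0 : L.[0] = (th + rho) / 2.
  have eb : b = sg ^+ 2 * a by rewrite sgsq mulfVK // gt_eqF.
  rewrite LE mulr0 subr0 /th /rho eb; field.
  by rewrite -eb !gt_eqF ?subr_gt0 //; lra.
(* The witness is T_m(L t) / T_m(L 0), where L maps [a, b] onto [-1, 1] and
   L 0 = (th + th^-1) / 2, so that T_m(L 0) >= th^m / 2 = rho^-m / 2. *)
pose tau := (cheb m).[L.[0]].
have tau_ge : th ^+ m / 2 <= tau.
  rewrite /tau L0 horner_cheb_half_sum // ler_pM2r ?invr_gt0 ?ltr0n //.
  by rewrite lerDl exprn_ge0 // ltW.
have tau0 : 0 < tau by rewrite (lt_le_trans _ tau_ge) // divr_gt0 ?exprn_gt0.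
exists (tau^-1 *: (cheb m \Po L)); split.
- have sL : (size L <= 2)%N.
    rewrite (leq_trans (size_polyD _ _)) // geq_max size_polyN size_polyC.
    rewrite (leq_trans (size_scale_leq _ _)) ?size_polyX ?andbT //.
    exact: leq_trans (leq_b1 _) _.
  rewrite (leq_trans (size_scale_leq _ _)) // (leq_trans (size_comp_poly_leq _ _)) //.
  have sT := size_cheb (R := R) m.
  by rewrite ltnS -[X in (_ <= X)%N]muln1 leq_mul // -subn1 leq_subLR add1n.
- by rewrite hornerZ horner_comp mulVf ?gt_eqF.
move=> t tab; rewrite hornerZ horner_comp normrM gtr0_norm ?invr_gt0 //.
have Lt : `|L.[t]| <= 1.
  rewrite LE normrM normfV [`|b - a|]gtr0_norm ?subr_gt0 //.
  rewrite ler_pdivrMr ?subr_gt0 // mul1r.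
  by rewrite ler_norml; apply/andP; split; lra.
apply: le_trans (ler_wpM2l _ (norm_horner_cheb_le1 m _ Lt)) _.
  by rewrite invr_ge0 ltW.
have -> : 2 * rho ^+ m = (th ^+ m / 2)^-1.
  by rewrite invf_div (_ : rho = th^-1) ?exprVn // invf_div.
by rewrite mulr1 lef_pV2 ?posrE // divr_gt0 ?exprn_gt0.
Qed.

Lemma small_poly_on_interval m {a b : R} : 0 < a -> a <= b ->
  exists s : {poly R}, [/\ (size s <= m.+1)%N, s.[0] = 1 &
    forall t, a <= t <= b -> `|s.[t]| <= 2 * cheb_rate (b / a) ^+ m].
Proof.
move=> a0; rewrite le_eqVlt => /predU1P[<-|]; last exact: small_poly_on_interval_lt.
rewrite /cheb_rate divff ?gt_eqF // sqrtr1 subrr mul0r.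
case: m => [|m].
  exists 1; split; rewrite ?size_poly1 ?hornerC //.
  by move=> t _; rewrite hornerE normr1 expr0 mulr1 ler1n.
exists (1 - a^-1 *: 'X); split.
- rewrite (leq_trans (size_polyD _ _)) // geq_max size_poly1 size_polyN.
  by rewrite (leq_trans (size_scale_leq _ _)) ?size_polyX.
- by rewrite !hornerE subr0.
move=> t /andP[le_at le_ta]; have -> : t = a by apply/eqP; rewrite eq_le le_ta le_at.
by rewrite !hornerE mulVf ?gt_eqF // subrr normr0 expr0n mulr0.
Qed.

End ChebyshevInterval.

Lemma horner_mx_sum {R : comNzRingType} {n} (M : 'M[R]_n.+1) (p : {poly R}) :
  horner_mx M p = \sum_(i < size p) p`_i *: M ^+ i.
Proof.
rewrite -[p in LHS]coefK poly_def linear_sum; apply: eq_bigr => i _.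
by rewrite linearZ rmorphXn /= horner_mx_X.
Qed.

Lemma take_poly1 {R : nzSemiRingType} (p : {poly R}) : take_poly 1 p = (p`_0)%:P.
Proof. by apply/polyP => -[|i]; rewrite coef_take_poly coefC. Qed.

Section Tridiagonal.
Context {R : rcfType} {k : nat} {M : 'M[R]_k.+1}.
Hypothesis tM : tridiagonal M.

Lemma tridiagonal_expr_eq0 i (j l : 'I_k.+1) : (i + l < j)%N -> (M ^+ i) j l = 0.
Proof.
elim: i j l => [|i IHi] j l lt_lj.
  by rewrite expr0 mxE -val_eqE /= gtn_eqF ?mulr0n.
rewrite exprS -mulmxE mxE big1 // => p _.
have [lt_pj|le_jp] := ltnP p.+1 j; first by rewrite tM ?mul0r // lt_pj orbT.
by rewrite IHi ?mulr0 // -ltnS (leq_trans lt_lj).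
Qed.

Lemma mulmx_efirst {m} (A : 'M[R]_(m, k.+1)) j : (A *m e_first R k.+1) j 0 = A j ord0.
Proof.
rewrite mxE (bigD1 ord0) //= mxE mulr1 big1 ?addr0 // => i /negPf i0.
by rewrite mxE -val_eqE /= in i0 *; rewrite i0 mulr0.
Qed.

Lemma horner_mx_efirst_last (p : {poly R}) :
  (size p <= k)%N -> (horner_mx M p *m e_first R k.+1) ord_max 0 = 0.
Proof.
move=> sp; rewrite horner_mx_sum mulmx_suml summxE big1 // => i _.
rewrite -scalemxAl mxE mulmx_efirst tridiagonal_expr_eq0 ?mulr0 //.
by rewrite addn0 (leq_trans _ sp).
Qed.

Lemma horner_mx_tridiagonal_last {s : {poly R}} {h : 'cV[R]_k.+1} {c} :
  (size s <= k.+1)%N -> s.[0] = 1 -> M *m h = c *: e_first R k.+1 ->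
  (horner_mx M s *m h) ord_max 0 = h ord_max 0.
Proof.
(* Write s = 1 + 'X * q with size q <= k: then s(M) h = h + c q(M) e_1. *)
move=> ss s0 Mh; rewrite -(poly_take_drop 1 s) take_poly1 -horner_coef0 s0.
rewrite rmorphD rmorphM /= horner_mx_X horner_mx_C mulmxDl mul1mx -mulmxE -mulmxA Mh.
rewrite -scalemxAr mxE [X in _ + X]mxE horner_mx_efirst_last ?mulr0 ?addr0 //.
by rewrite size_drop_poly leq_subLR.
Qed.

End Tridiagonal.

Section VectorNorm.
Context {R : rcfType}.

Lemma vnormZ {n} (a : R) (v : 'cV[R]_n) : vnorm (a *: v) = `|a| * vnorm v.
Proof.
rewrite /vnorm (eq_bigr (fun i => a ^+ 2 * v i 0 ^+ 2)) => [|i _]; last first.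
  by rewrite mxE exprMn.
by rewrite -mulr_sumr sqrtrM ?sqr_ge0 // sqrtr_sqr.
Qed.

Lemma vnormE {n} (v : 'cV[R]_n) : vnorm v = Num.sqrt ((v^T *m v) 0 0).
Proof. by rewrite mxE; congr Num.sqrt; apply: eq_bigr => i _; rewrite mxE expr2. Qed.

Lemma vnorm_gt0 {n} (v : 'cV[R]_n) : v != 0 -> 0 < vnorm v.
Proof.
move=> v0; have [i vi0] : exists i, v i 0 != 0.
  apply/existsP; apply: contraR v0 => /existsPn v0; apply/eqP/colP => j.
  by rewrite mxE; apply/eqP; rewrite -[_ == 0]negbK v0.
rewrite sqrtr_gt0 (bigD1 i) //= ltr_wpDr ?sumr_ge0 // => [j _|]; first exact: sqr_ge0.
by rewrite lt_def sqrf_eq0 vi0 sqr_ge0.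
Qed.

Lemma abs_entry_le_vnorm {n} (v : 'cV[R]_n) i : `|v i 0| <= vnorm v.
Proof.
rewrite -sqrtr_sqr ler_sqrt ?sumr_ge0 // => [|j _]; last exact: sqr_ge0.
by rewrite (bigD1 i) //= lerDl sumr_ge0 // => j _; rewrite sqr_ge0.
Qed.

Lemma vnorm_isometry {m n} (Q : 'M[R]_(m, n)) (v : 'cV[R]_n) :
  Q^T *m Q = 1%:M -> vnorm (Q *m v) = vnorm v.
Proof.
by move=> QQ; rewrite !vnormE trmx_mul mulmxA -[_ *m Q^T *m Q]mulmxA QQ mulmx1.
Qed.

Lemma vnorm_le {n} (u v : 'cV[R]_n) (C : R) : 0 <= C ->
  \sum_i u i 0 ^+ 2 <= C ^+ 2 * \sum_i v i 0 ^+ 2 -> vnorm u <= C * vnorm v.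
Proof.
move=> C0 uv; rewrite /vnorm -(ger0_norm C0) -sqrtr_sqr -sqrtrM ?sqr_ge0 //.
by rewrite ler_sqrt // mulr_ge0 ?sqr_ge0 // sumr_ge0 // => i _; rewrite sqr_ge0.
Qed.

End VectorNorm.

Section UnitaryNorm.
Context {K : numClosedFieldType}.
Local Open Scope sesquilinear_scope.

Lemma sum_normX_dot {n} (u : 'cV[K]_n) : \sum_i `|u i 0| ^+ 2 = (u^t* *m u) 0 0.
Proof. by rewrite mxE; apply: eq_bigr => i _; rewrite !mxE normCK mulrC. Qed.

Lemma sum_normX_unitary {n} (P : 'M[K]_n) (u : 'cV[K]_n) : P \is unitarymx ->
  \sum_i `|(P *m u) i 0| ^+ 2 = \sum_i `|u i 0| ^+ 2.
Proof.
move=> Pu; rewrite !sum_normX_dot trmx_mul map_mxM mulmxA -[_ *m P^t* *m P]mulmxA.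
by rewrite -invmx_unitary // mulVmx ?unitarymx_unit // mulmx1.
Qed.

Lemma sum_normX_diag_le {n} (e : 'rV[K]_n) (u : 'cV[K]_n) c :
  (forall i, `|e 0 i| ^+ 2 <= c) ->
  \sum_i `|(diag_mx e *m u) i 0| ^+ 2 <= c * \sum_i `|u i 0| ^+ 2.
Proof.
move=> ec; rewrite mulr_sumr; apply: ler_sum => i _.
by rewrite mul_diag_mx mxE normrM exprMn ler_wpM2r ?exprn_ge0.
Qed.

End UnitaryNorm.

Lemma eigenvalue_conj_diag {F : fieldType} {n} (P : 'M[F]_n) (d : 'rV[F]_n) i :
  P \in unitmx -> eigenvalue (invmx P *m diag_mx d *m P) (d 0 i).
Proof.
move=> Pu; apply/eigenvalueP; exists (row i P).
  rewrite !mulmxA -row_mul mulmxV // -[row i 1%:M *m _]row_mul mul1mx.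
  by rewrite row_diag_mx -scalemxAl -rowE.
apply/eqP => /(congr1 (mulmx^~ (invmx P))).
by rewrite -row_mul mulmxV // mul0mx => /rowP/(_ i)/eqP; rewrite !mxE eqxx oner_eq0.
Qed.

Section SymmetricSpectralBound.
Context {R : rcfType}.
Local Notation f := (real_complex R).

Lemma sym_horner_mx_le {k} (M : 'M[R]_k.+1) (p : {poly R}) (C : R)
    (v : 'cV[R]_k.+1) :
  M^T = M -> 0 <= C -> (forall a, eigenvalue M a -> `|p.[a]| <= C) ->
  vnorm (horner_mx M p *m v) <= C * vnorm v.
Proof.
(* Diagonalize the complexification of M by a unitary matrix: its diagonal
   entries are real, hence eigenvalues of M. *)
move=> sM C0 pC; apply: vnorm_le => //.
have f_real x : f x \is Num.real by rewrite complex_real.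
have sum_map (u : 'cV[R]_k.+1) :
    f (\sum_i u i 0 ^+ 2) = \sum_i `|(map_mx f u) i 0| ^+ 2.
  by rewrite rmorph_sum; apply: eq_bigr => i _; rewrite mxE real_normK ?rmorphXn.
rewrite -lecR rmorphM /= !sum_map map_mxM map_horner_mx.
set Mc := map_mx f M.
have herm : Mc \is hermsymmx.
  apply/is_hermitianmxP; rewrite expr0 scale1r.
  by apply/matrixP => i j; rewrite !mxE conj_Creal // -[in LHS]sM mxE.
have /orthomx_spectralP Mc_eq := hermitian_normalmx herm.
set P := spectralmx Mc in Mc_eq; set d := spectral_diag Mc in Mc_eq.
have Pu : P \is unitarymx := spectral_unitarymx Mc.
rewrite [in horner_mx Mc _]Mc_eq horner_mx_uconjC ?spectral_unit // horner_mx_diag.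
rewrite invmx_unitary // -!mulmxA sum_normX_unitary ?trmxC_unitary //.
rewrite -(sum_normX_unitary P (map_mx f v) Pu); apply: sum_normX_diag_le => i.
have /complex_realP[r dr] : d 0 i \is Num.real.
  by move/mxOverP: (hermitian_spectral_diag_real herm) => /(_ 0 i).
have eig_r : eigenvalue M r.
  have := eigenvalue_conj_diag P d i (spectral_unit Mc).
  by rewrite -Mc_eq dr eigenvalue_map.
rewrite mxE dr horner_map /= real_normK // -rmorphXn lecR.
by rewrite -real_normK ?num_real // !expr2 ler_pM ?pC.
Qed.

End SymmetricSpectralBound.

Section GLTR.
Context {R : rcfType}.

Lemma posdef_eigenvalue_gt0 {k} {M : 'M[R]_k} {a} : posdef M -> eigenvalue M a -> 0 < a.
Proof.
move=> pd /eigenvalueP[u uM u0]; have uT0 : u^T != 0 by rewrite trmx_eq0.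
have := pd _ uT0; rewrite /sc trmxK uM -scalemxAl mxE pmulr_lgt0 //.
by have := vnorm_gt0 _ uT0; rewrite vnormE trmxK sqrtr_gt0.
Qed.

Lemma mul_tr_elast {k} (h : 'cV[R]_k.+1) : (e_last R k.+1)^T *m h = (h ord_max 0)%:M.
Proof.
apply/matrixP => i j; rewrite !ord1 !mxE (bigD1 ord_max) //= !mxE eqxx mul1r.
rewrite big1 ?addr0 // => l /negPf lmax; rewrite !mxE.
by rewrite -val_eqE /= in lmax; rewrite lmax mul0r.
Qed.

Lemma gltr_residualE {n k} {A : 'M[R]_n} {Q : 'M[R]_(n, k.+1)} {T : 'M[R]_k.+1}
    {beta lambda : R} {g q : 'cV[R]_n} {h : 'cV[R]_k.+1} :
  A *m Q = Q *m T + beta *: (q *m (e_last R k.+1)^T) ->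
  Q *m e_first R k.+1 = (vnorm g)^-1 *: g -> g != 0 ->
  (T + lambda%:M) *m h = - (vnorm g *: e_first R k.+1) ->
  (A + lambda%:M) *m (Q *m h) + g = (beta * h ord_max 0) *: q.
Proof.
move=> AQ Qe1 g0 Th.
have QTh : Q *m ((T + lambda%:M) *m h) = - g.
  by rewrite Th mulmxN -scalemxAr Qe1 scalerA mulfV ?scale1r ?gt_eqF ?vnorm_gt0.
rewrite mulmxDl mulmxA AQ mulmxDl -scalemxAl -!mulmxA mul_tr_elast mul_mx_scalar.
rewrite [lambda%:M *m _]mul_scalar_mx scalemxAr -[lambda *: h]mul_scalar_mx.
by rewrite [Q *m _ + _ + _]addrAC -mulmxDr -mulmxDl QTh addrAC addNr add0r scalerA.
Qed.

End GLTR.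

Theorem theorem3p8 (R : rcfType) (n k : nat)
  (A : 'M[R]_n) (g : 'cV[R]_n) (Delta : R)
  (Q : 'M[R]_(n, k)) (T : 'M[R]_k) (beta : R) (q : 'cV[R]_n)
  (h : 'cV[R]_k) (lambda : R) (lmax lmin : R) :
  A^T = A -> g != 0 -> 0 < Delta -> (0 < k)%N ->
  (* Lanczos quantities *)
  Q^T *m Q = 1%:M ->
  (Q^T :=: krylov k A g)%MS ->
  Q *m e_first R k = (vnorm g)^-1 *: g ->
  T = Q^T *m A *m Q ->
  tridiagonal T ->
  0 <= beta -> vnorm q = 1 -> (0 < beta -> Q^T *m q = 0) ->
  A *m Q = Q *m T + beta *: (q *m (e_last R k)^T) ->
  (* GLTR subproblem solution h_k with multiplier lambda_k *)
  vnorm h <= Delta ->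
  (forall h' : 'cV[R]_k, vnorm h' <= Delta ->
     tr_model T (vnorm g) h <= tr_model T (vnorm g) h') ->
  0 <= lambda ->
  (T + lambda%:M) *m h = - (vnorm g *: e_first R k) ->
  lambda * (Delta - vnorm h) = 0 ->
  posdef (T + lambda%:M) ->
  (* extreme eigenvalues of T_k + lambda_k I *)
  eigenvalue (T + lambda%:M) lmax ->
  (forall a, eigenvalue (T + lambda%:M) a -> a <= lmax) ->
  eigenvalue (T + lambda%:M) lmin ->
  (forall a, eigenvalue (T + lambda%:M) a -> lmin <= a) ->
  let x := Q *m h in
  let r := (A + lambda%:M) *m x + g in
  let kappa := lmax / lmin in
  vnorm r <= 2 * beta * vnorm x *
    ((Num.sqrt kappa - 1) / (Num.sqrt kappa + 1)) ^+ k.-1.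
Proof.
move=> sA g0 _; case: k Q T h => [|k] Q T h; first by [].
move=> _ QQ _ Qe1 TE tT b0 nq _ AQ _ _ _ Th _ pd emax le_max emin ge_min /=.
set M := T + lambda%:M in Th pd emax le_max emin ge_min *.
have sM : M^T = M.
  by rewrite linearD /= tr_scalar_mx TE !trmx_mul trmxK sA mulmxA -TE.
have tM : tridiagonal M.
  move=> i j ij; rewrite !mxE tT // add0r.
  by case: eqP ij => // ->; rewrite orbb ltnNge leqW.
have lmin0 := posdef_eigenvalue_gt0 pd emin.
have [s [ss s0 s_small]] := small_poly_on_interval k lmin0 (ge_min _ emax).
set C := 2 * _ in s_small.
have C0 : 0 <= C by rewrite (le_trans _ (s_small lmin _)) ?lexx ?ge_min.
have h_last : `|h ord_max 0| <= C * vnorm h.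
  have Mh : M *m h = (- vnorm g) *: e_first R k.+1 by rewrite Th scaleNr.
  rewrite -(horner_mx_tridiagonal_last tM ss s0 Mh).
  apply: le_trans (abs_entry_le_vnorm _ _) _; apply: sym_horner_mx_le => // a ea.
  by rewrite s_small ?ge_min ?le_max.
rewrite (gltr_residualE AQ Qe1 g0 Th) vnormZ nq mulr1 normrM ger0_norm //.
rewrite vnorm_isometry // (_ : 2 * beta * _ * _ = beta * (C * vnorm h)).
  by apply: ler_wpM2l.
by rewrite /C /cheb_rate; ring.
Qed.
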